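(* In the setting of the context, with $S,E,I$ as defined there, the function $E(t)+I(t)$ attains its maximum \[ \max_{t\ge0}\bigl(E(t)+I(t)\bigr)=\tilde S+\tilde E+\tilde I-\frac{\gamma}{\beta}\Bigl(1+\log\tilde S-\log\frac{\gamma}{\beta}\Bigr) \] at \[ t=T_3:=\varphi\Bigl(\frac{\gamma}{\beta\tilde S e^{(\beta/\gamma)\tilde R}}\Bigr)=\int_{\gamma/(\beta\tilde S e^{(\beta/\gamma)\tilde R})}^{u_0}\frac{d\xi}{\xi\psi(\xi)}=S^{-1}\Bigl(\frac{\gamma}{\beta}\Bigr). \] Moreover, $E+I$ is increasing on $[0,T_3)$ and decreasing on $(T_3,\infty)$.
   Context: Let $\beta,\gamma,\delta>0$ be constants and $\tilde S,\tilde E,\tilde I,\tilde R$ real numbers with $N:=\tilde S+\tilde E+\tilde I+\tilde R>0$. Standing assumptions: (A1) $\tilde I>0$; (A2) $\tilde E>(\gamma/\delta)\tilde I$; (A3) $\tilde S>\delta\tilde E/(\beta\tilde I)$; (A4) $\tilde R\ge 0$ and $N>\tilde S e^{(\beta/\gamma)\tilde R}+\tilde R$. Let $\alpha$ be the unique solution in $(\tilde R,N)$ of $x=N-\tilde S e^{(\beta/\gamma)\tilde R}e^{-(\beta/\gamma)x}$, and assume (A5) $\tilde S<(\gamma/\beta)e^{(\beta/\gamma)(\alpha-\tilde R)}$. Put $u_0:=e^{-(\beta/\gamma)\tilde R}$, $u_\infty:=e^{-(\beta/\gamma)\alpha}$. Let $\psi$ be the unique function, continuous and positive on $(u_\infty,u_0]$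 and $C^1$ on $(u_\infty,u_0)$, satisfying $\psi'(u)\psi(u)-\frac{\gamma+\delta}{u}\psi(u)=-\delta\,\frac{\beta N-\beta\tilde S e^{(\beta/\gamma)\tilde R}u+\gamma\log u}{u}$ on $(u_\infty,u_0)$ and $\psi(u_0)=\beta\tilde I$. Let $\varphi(u):=\int_u^{u_0}\frac{d\xi}{\xi\psi(\xi)}$; $\varphi$ is a strictly decreasing continuous bijection from $(u_\infty,u_0]$ onto $[0,\infty)$, $C^1$ on $(u_\infty,u_0)$, with inverse $\varphi^{-1}:[0,\infty)\to(u_\infty,u_0]$. For $t\ge 0$ define $S(t)=\tilde S e^{(\beta/\gamma)\tilde R}\varphi^{-1}(t)$, $E(t)=\tilde E e^{-\delta t}+\tilde S e^{(\beta/\gamma)\tilde R}e^{-\delta t}\int_{\varphi^{-1}(t)}^{u_0}e^{\delta\varphi(v)}dv$, $I(t)=N-\tilde S e^{(\beta/\gamma)\tilde R}\varphi^{-1}(t)+\frac{\gamma}{\beta}\log\varphi^{-1}(t)-E(t)$; $S^{-1}$ denotes the inverse of the strictly decreasing function $S$. *)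

From Stdlib Require Import Reals Lra.
From Coquelicot Require Import Coquelicot.
Open Scope R_scope.

Definition seir_assumptions (beta gamma delta St Et It Rt : R) : Prop :=
  0 < beta /\ 0 < gamma /\ 0 < delta /\
  0 < St + Et + It + Rt /\
  0 < It /\
  Et > (gamma / delta) * It /\
  St > delta * Et / (beta * It) /\
  0 <= Rt /\
  St + Et + It + Rt > St * exp ((beta / gamma) * Rt) + Rt.

(* alpha is a solution in (Rt, N) of x = N - St e^{(beta/gamma)Rt} e^{-(beta/gamma)x}
   (the context asserts it is the unique one). *)
Definition is_alpha (beta gamma St Et It Rt alpha : R) : Prop :=
  Rt < alpha < St + Et + It + Rt /\
  alpha = St + Et + It + Rt
          - St * exp ((beta / gamma) * Rt) * exp (- (beta / gamma) * alpha).

Definition u0_of (beta gamma Rt : R) : R := exp (- (beta / gamma) * Rt).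
Definition uinf_of (beta gamma alpha : R) : R := exp (- (beta / gamma) * alpha).

(* psi: continuous and positive on (uinf, u0], C^1 on (uinf, u0), solving the ODE
   psi' psi - (gamma+delta)/u psi = -delta (beta N - beta St e^{(beta/gamma)Rt} u + gamma log u)/u
   with psi(u0) = beta It.  (The context asserts that this psi is unique.) *)
Definition is_psi (beta gamma delta St Et It Rt alpha : R) (psi : R -> R) : Prop :=
  let N := St + Et + It + Rt in
  let u0 := u0_of beta gamma Rt in
  let uinf := uinf_of beta gamma alpha in
  (forall u, uinf < u < u0 -> continuous psi u) /\
  filterlim psi (at_left u0) (locally (psi u0)) /\
  (forall u, uinf < u <= u0 -> 0 < psi u) /\
  (forall u, uinf < u < u0 -> ex_derive psi u /\ continuous (Derive psi) u) /\
  (forall u, uinf < u < u0 ->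
     Derive psi u * psi u - (gamma + delta) / u * psi u
     = - delta * (beta * N - beta * St * exp ((beta / gamma) * Rt) * u + gamma * ln u) / u) /\
  psi u0 = beta * It.

Definition phi_of (u0 : R) (psi : R -> R) (u : R) : R :=
  RInt (fun xi => / (xi * psi xi)) u u0.

Definition is_phiinv (uinf u0 : R) (psi : R -> R) (phiinv : R -> R) : Prop :=
  forall t, 0 <= t -> uinf < phiinv t <= u0 /\ phi_of u0 psi (phiinv t) = t.

Definition S_fun (beta gamma St Rt : R) (phiinv : R -> R) (t : R) : R :=
  St * exp ((beta / gamma) * Rt) * phiinv t.

Definition E_fun (beta gamma delta St Et Rt : R) (psi phiinv : R -> R) (t : R) : R :=
  let u0 := u0_of beta gamma Rt in
  Et * exp (- delta * t)
  + St * exp ((beta / gamma) * Rt) * exp (- delta * t)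
    * RInt (fun v => exp (delta * phi_of u0 psi v)) (phiinv t) u0.

Definition I_fun (beta gamma delta St Et It Rt : R) (psi phiinv : R -> R) (t : R) : R :=
  let N := St + Et + It + Rt in
  N - St * exp ((beta / gamma) * Rt) * phiinv t + (gamma / beta) * ln (phiinv t)
  - E_fun beta gamma delta St Et Rt psi phiinv t.

(* Since E + I = N - S + (gamma/beta) log u with S = St e^{(beta/gamma)Rt} u and u = phiinv t,
   the function E + I is a fixed concave function of u, namely N + c ln u - K u, maximal at
   u = c/K, i.e. where S = gamma/beta.  Time enters only through u = phiinv t, which is
   strictly decreasing because phi is the integral of a positive function; (A2)-(A3) and (A5)
   place the maximiser inside (uinf, u0), so it is reached at the positive time T3. *)
From Stdlib Require Import Reals Lra.
From Coquelicot Require Import Coquelicot.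
Open Scope R_scope.

Lemma ln_lt_sub_1 (x : R) : 0 < x -> x <> 1 -> ln x < x - 1.
Proof.
  intros Hx Hx1.
  assert (Hln : ln x <> 0) by (intros H; apply Hx1; rewrite <- (exp_ln x), H, exp_0; lra).
  pose proof (exp_ineq1 (ln x) Hln) as Hexp. rewrite exp_ln in Hexp by exact Hx. lra.
Qed.

Lemma ln_sub_lt_div_l (u v : R) : 0 < u -> u < v -> ln v - ln u < (v - u) / u.
Proof.
  intros Hu Huv. rewrite <- ln_div by lra.
  replace ((v - u) / u) with (v / u - 1) by (field; lra).
  apply ln_lt_sub_1.
  - apply Rdiv_lt_0_compat; lra.
  - intros H. apply Rmult_eq_compat_r with (r := u) in H.
    replace (v / u * u) with v in H by (field; lra). lra.
Qed.

Lemma ln_sub_gt_div_r (u v : R) : 0 < u -> u < v -> (v - u) / v < ln v - ln u.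
Proof.
  intros Hu Huv.
  assert (H : ln (u / v) < u / v - 1).
  { apply ln_lt_sub_1.
    - apply Rdiv_lt_0_compat; lra.
    - intros H. apply Rmult_eq_compat_r with (r := v) in H.
      replace (u / v * v) with u in H by (field; lra). lra. }
  rewrite ln_div in H by lra.
  replace (u / v - 1) with (- ((v - u) / v)) in H by (field; lra). lra.
Qed.

Definition ln_sub_lin (K c u : R) : R := c * ln u - K * u.

Lemma ln_sub_lin_increasing (K c u v : R) : 0 < K -> 0 < c -> 0 < u -> u < v -> v <= c / K ->
  ln_sub_lin K c u < ln_sub_lin K c v.
Proof.
  intros HK Hc Hu Huv Hv. unfold ln_sub_lin.
  assert (HKv : K * v <= c).
  { apply Rmult_le_compat_l with (r := K) in Hv; [|lra].
    replace (K * (c / K)) with c in Hv by (field; lra). exact Hv. }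
  assert (Hw : 0 <= (v - u) / v) by (apply Rdiv_le_0_compat; lra).
  assert (HKuv : K * (v - u) <= c * ((v - u) / v)).
  { replace (K * (v - u)) with (K * v * ((v - u) / v)) by (field; lra).
    apply Rmult_le_compat_r; assumption. }
  assert (c * ((v - u) / v) < c * (ln v - ln u))
    by (apply Rmult_lt_compat_l; [exact Hc | apply ln_sub_gt_div_r; assumption]).
  lra.
Qed.

Lemma ln_sub_lin_decreasing (K c u v : R) : 0 < K -> 0 < c -> c / K <= u -> u < v ->
  ln_sub_lin K c v < ln_sub_lin K c u.
Proof.
  intros HK Hc Hu Huv. unfold ln_sub_lin.
  assert (Hu0 : 0 < u) by (assert (0 < c / K) by (apply Rdiv_lt_0_compat; lra); lra).
  assert (HKu : c <= K * u).
  { apply Rmult_le_compat_l with (r := K) in Hu; [|lra].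
    replace (K * (c / K)) with c in Hu by (field; lra). exact Hu. }
  assert (Hw : 0 <= (v - u) / u) by (apply Rdiv_le_0_compat; lra).
  assert (c * ((v - u) / u) <= K * (v - u)).
  { replace (K * (v - u)) with (K * u * ((v - u) / u)) by (field; lra).
    apply Rmult_le_compat_r; assumption. }
  assert (c * (ln v - ln u) < c * ((v - u) / u))
    by (apply Rmult_lt_compat_l; [exact Hc | apply ln_sub_lt_div_l; assumption]).
  lra.
Qed.

Lemma ln_sub_lin_le_max (K c u : R) : 0 < K -> 0 < c -> 0 < u ->
  ln_sub_lin K c u <= ln_sub_lin K c (c / K).
Proof.
  intros HK Hc Hu. destruct (Rtotal_order u (c / K)) as [h | [h | h]].
  - left. apply ln_sub_lin_increasing; lra.
  - subst; lra.
  - left. apply ln_sub_lin_decreasing; lra.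
Qed.

Lemma ln_sub_lin_comp_unimodal (K c T : R) (u : R -> R) :
  0 < K -> 0 < c -> 0 <= T -> u T = c / K ->
  (forall t, 0 <= t -> 0 < u t) ->
  (forall s t, 0 <= s -> s < t -> u t < u s) ->
  (forall t, 0 <= t -> ln_sub_lin K c (u t) <= ln_sub_lin K c (u T)) /\
  (forall s t, 0 <= s -> s < t -> t < T -> ln_sub_lin K c (u s) < ln_sub_lin K c (u t)) /\
  (forall s t, T < s -> s < t -> ln_sub_lin K c (u t) < ln_sub_lin K c (u s)).
Proof.
  intros HK Hc HT HuT Hpos Hdec. rewrite HuT. split; [| split].
  - intros t Ht. apply ln_sub_lin_le_max; auto.
  - intros s t Hs Hst HtT.
    pose proof (Hdec s t Hs Hst). pose proof (Hdec t T ltac:(lra) HtT).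
    apply ln_sub_lin_decreasing; lra.
  - intros s t HsT Hst.
    pose proof (Hdec s t ltac:(lra) Hst). pose proof (Hdec T s HT HsT).
    apply ln_sub_lin_increasing; [| | apply Hpos | |]; lra.
Qed.

Lemma continuous_Rmin_l (c x : R) : continuous (fun y => Rmin y c) x.
Proof.
  apply filterlim_locally. intros eps. exists eps. intros y Hy.
  revert Hy; unfold ball; simpl; unfold AbsRing_ball, abs, minus, plus, opp; simpl.
  intros Hy. apply Rabs_lt_between in Hy. apply Rabs_lt_between.
  unfold Rmin; destruct (Rle_dec y c), (Rle_dec x c); lra.
Qed.

Lemma continuous_Rmin_at_left (f : R -> R) (c : R) :
  filterlim f (at_left c) (locally (f c)) -> continuous (fun y => f (Rmin y c)) c.
Proof.
  intros Hf. apply filterlim_locally. intros eps.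
  apply filterlim_locally with (eps := eps) in Hf. destruct Hf as [d Hd].
  exists d. intros y Hy. rewrite (Rmin_left c c) by lra.
  unfold Rmin; destruct (Rle_dec y c) as [h | h].
  - destruct (Rle_lt_or_eq_dec _ _ h) as [h' | ->].
    + apply Hd; assumption.
    + apply ball_center.
  - apply ball_center.
Qed.

Definition phi_integrand (psi : R -> R) (xi : R) : R := / (xi * psi xi).

Lemma phi_of_RInt (u0 : R) (psi : R -> R) (u : R) :
  phi_of u0 psi u = RInt (phi_integrand psi) u u0.
Proof. reflexivity. Qed.

Lemma phi_of_u0 (u0 : R) (psi : R -> R) : phi_of u0 psi u0 = 0.
Proof. unfold phi_of. rewrite RInt_point. reflexivity. Qed.

Section PhiMonotone.

Variables (uinf u0 : R) (psi : R -> R).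
Hypothesis uinf_ge0 : 0 <= uinf.
Hypothesis psi_cont : forall u, uinf < u < u0 -> continuous psi u.
Hypothesis psi_cont_u0 : filterlim psi (at_left u0) (locally (psi u0)).
Hypothesis psi_pos : forall u, uinf < u <= u0 -> 0 < psi u.

Lemma phi_integrand_pos (x : R) : uinf < x <= u0 -> 0 < phi_integrand psi x.
Proof.
  intros Hx. unfold phi_integrand. pose proof (psi_pos x Hx).
  apply Rinv_0_lt_compat. nra.
Qed.

(* Clamping at u0 turns the one-sided continuity of psi at u0 into continuity on [a, u0]. *)
Lemma phi_integrand_clamped_continuous (z : R) : uinf < z <= u0 ->
  continuous (fun x => phi_integrand psi (Rmin x u0)) z.
Proof.
  intros Hz.
  assert (Hpsi : continuous (fun y => psi (Rmin y u0)) z).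
  { destruct (Rle_lt_or_eq_dec _ _ (proj2 Hz)) as [h | ->].
    - apply continuous_comp with (f := fun y => Rmin y u0) (g := psi).
      + apply continuous_Rmin_l.
      + rewrite Rmin_left by lra. apply psi_cont; lra.
    - apply continuous_Rmin_at_left, psi_cont_u0. }
  unfold phi_integrand. apply continuous_Rinv_comp.
  - apply (continuous_mult (U := R_UniformSpace) (K := R_AbsRing));
      [apply continuous_Rmin_l | exact Hpsi].
  - rewrite Rmin_left by lra. pose proof (psi_pos z Hz). nra.
Qed.

Lemma phi_integrand_eq_clamped (a b x : R) : a <= b -> b <= u0 -> Rmin a b < x < Rmax a b ->
  phi_integrand psi x = phi_integrand psi (Rmin x u0).
Proof.
  intros Hab Hb Hx. rewrite Rmax_right in Hx by exact Hab.
  rewrite Rmin_left; [reflexivity | lra].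
Qed.

Lemma ex_RInt_phi_integrand (a b : R) : uinf < a <= b -> b <= u0 ->
  ex_RInt (phi_integrand psi) a b.
Proof.
  intros Ha Hb.
  apply ex_RInt_ext with (f := fun x => phi_integrand psi (Rmin x u0)).
  { intros x Hx. symmetry. apply (phi_integrand_eq_clamped a b); tauto. }
  apply (ex_RInt_continuous (V := R_CompleteNormedModule)). intros z Hz.
  rewrite Rmin_left, Rmax_right in Hz by lra.
  apply phi_integrand_clamped_continuous; lra.
Qed.

Lemma RInt_phi_integrand_pos (a b : R) : uinf < a < b -> b <= u0 ->
  0 < RInt (phi_integrand psi) a b.
Proof.
  intros Hab Hb.
  rewrite (RInt_ext (V := R_CompleteNormedModule) _ (fun x => phi_integrand psi (Rmin x u0)))
    by (intros x Hx; apply (phi_integrand_eq_clamped a b); lra).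
  apply RInt_gt_0; [lra | |].
  - intros x Hx. rewrite Rmin_left by lra. apply phi_integrand_pos; lra.
  - intros x Hx. apply phi_integrand_clamped_continuous; lra.
Qed.

Lemma phi_decreasing (a b : R) : uinf < a -> a < b -> b <= u0 ->
  phi_of u0 psi b < phi_of u0 psi a.
Proof.
  intros Ha Hab Hb. rewrite !phi_of_RInt.
  rewrite <- (RInt_Chasles (V := R_CompleteNormedModule) (phi_integrand psi) a b u0)
    by (apply ex_RInt_phi_integrand; lra).
  pose proof (RInt_phi_integrand_pos a b ltac:(lra) Hb).
  unfold plus; simpl. lra.
Qed.

Lemma phi_nonneg (u : R) : uinf < u <= u0 -> 0 <= phi_of u0 psi u.
Proof.
  intros Hu. rewrite <- (phi_of_u0 u0 psi).
  destruct (Rle_lt_or_eq_dec _ _ (proj2 Hu)) as [h | ->]; [left; apply phi_decreasing | ]; lra.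
Qed.

Lemma phi_inj (a b : R) : uinf < a <= u0 -> uinf < b <= u0 ->
  phi_of u0 psi a = phi_of u0 psi b -> a = b.
Proof.
  intros Ha Hb Hab. destruct (Rtotal_order a b) as [h | [h | h]]; [| exact h |].
  - pose proof (phi_decreasing a b ltac:(lra) h ltac:(lra)). lra.
  - pose proof (phi_decreasing b a ltac:(lra) h ltac:(lra)). lra.
Qed.

Variable phiinv : R -> R.
Hypothesis phiinv_spec : is_phiinv uinf u0 psi phiinv.

Lemma phiinv_phi (u : R) : uinf < u <= u0 -> phiinv (phi_of u0 psi u) = u.
Proof.
  intros Hu. destruct (phiinv_spec _ (phi_nonneg u Hu)) as [Hrange Hphi].
  apply phi_inj; assumption.
Qed.

Lemma phiinv_decreasing (s t : R) : 0 <= s -> s < t -> phiinv t < phiinv s.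
Proof.
  intros Hs Hst.
  destruct (phiinv_spec s Hs) as [Hs1 Hs2], (phiinv_spec t ltac:(lra)) as [Ht1 Ht2].
  destruct (Rtotal_order (phiinv t) (phiinv s)) as [h | [h | h]]; [exact h | |].
  - rewrite h in Ht2. lra.
  - pose proof (phi_decreasing (phiinv s) (phiinv t) ltac:(lra) h ltac:(lra)). lra.
Qed.

End PhiMonotone.

Lemma seir_threshold_lt_St (beta gamma delta St Et It Rt : R) :
  seir_assumptions beta gamma delta St Et It Rt -> gamma / beta < St.
Proof.
  intros (Hb & Hg & Hd & _ & HI & HA2 & HA3 & _).
  assert (HgI : gamma * It < delta * Et).
  { apply Rmult_lt_compat_l with (r := delta) in HA2; [|lra].
    replace (delta * (gamma / delta * It)) with (gamma * It) in HA2 by (field; lra). lra. }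
  enough (gamma / beta < delta * Et / (beta * It)) by lra.
  apply Rmult_lt_reg_r with (r := beta * It); [nra|].
  replace (gamma / beta * (beta * It)) with (gamma * It) by (field; lra).
  replace (delta * Et / (beta * It) * (beta * It)) with (delta * Et) by (field; lra).
  exact HgI.
Qed.

Lemma EI_eq_ln_sub_lin (beta gamma delta St Et It Rt : R) (psi phiinv : R -> R) (t : R) :
  E_fun beta gamma delta St Et Rt psi phiinv t + I_fun beta gamma delta St Et It Rt psi phiinv t
  = St + Et + It + Rt
    + ln_sub_lin (St * exp ((beta / gamma) * Rt)) (gamma / beta) (phiinv t).
Proof. unfold I_fun, ln_sub_lin. ring. Qed.

Lemma ln_sub_lin_max_value (beta gamma St Et It Rt : R) :
  0 < beta -> 0 < gamma -> 0 < St ->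
  let K := St * exp ((beta / gamma) * Rt) in
  St + Et + It + Rt + ln_sub_lin K (gamma / beta) ((gamma / beta) / K)
  = St + Et + It - (gamma / beta) * (1 + ln St - ln (gamma / beta)).
Proof.
  intros Hb Hg HSt K. unfold ln_sub_lin, K.
  assert (Hc : 0 < gamma / beta) by (apply Rdiv_lt_0_compat; assumption).
  assert (HE : 0 < exp ((beta / gamma) * Rt)) by apply exp_pos.
  rewrite ln_div, ln_mult, ln_exp by nra.
  field. lra.
Qed.

Lemma seir_maximiser_bounds (beta gamma St Rt alpha : R) :
  0 < beta -> 0 < gamma -> gamma / beta < St ->
  St < (gamma / beta) * exp ((beta / gamma) * (alpha - Rt)) ->
  uinf_of beta gamma alpha < (gamma / beta) / (St * exp ((beta / gamma) * Rt))
  < u0_of beta gamma Rt.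
Proof.
  intros Hb Hg HSt HA5.
  assert (Hc : 0 < gamma / beta) by (apply Rdiv_lt_0_compat; assumption).
  assert (HE : 0 < exp ((beta / gamma) * Rt)) by apply exp_pos.
  assert (HK : 0 < St * exp ((beta / gamma) * Rt)) by nra.
  assert (Hinf : uinf_of beta gamma alpha * exp ((beta / gamma) * (alpha - Rt))
                 = / exp ((beta / gamma) * Rt)).
  { unfold uinf_of. rewrite <- exp_Ropp, <- exp_plus. f_equal. ring. }
  assert (H0 : u0_of beta gamma Rt = / exp ((beta / gamma) * Rt)).
  { unfold u0_of. rewrite <- exp_Ropp. f_equal. ring. }
  rewrite H0. split.
  - apply Rmult_lt_reg_r with (r := St * exp ((beta / gamma) * (alpha - Rt))).
    + pose proof (exp_pos ((beta / gamma) * (alpha - Rt))). nra.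
    + replace (uinf_of beta gamma alpha * (St * exp ((beta / gamma) * (alpha - Rt))))
        with (St * / exp ((beta / gamma) * Rt)) by (rewrite <- Hinf; ring).
      replace (gamma / beta / (St * exp ((beta / gamma) * Rt))
               * (St * exp ((beta / gamma) * (alpha - Rt))))
        with (gamma / beta * exp ((beta / gamma) * (alpha - Rt)) * / exp ((beta / gamma) * Rt))
        by (field; lra).
      apply Rmult_lt_compat_r; [apply Rinv_0_lt_compat |]; assumption.
  - apply Rmult_lt_reg_r with (r := St * exp ((beta / gamma) * Rt)); [exact HK|].
    replace (gamma / beta / (St * exp ((beta / gamma) * Rt)) * (St * exp ((beta / gamma) * Rt)))
      with (gamma / beta) by (field; lra).
    replace (/ exp ((beta / gamma) * Rt) * (St * exp ((beta / gamma) * Rt))) with St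
      by (field; lra).
    exact HSt.
Qed.

Theorem theorem11 (beta gamma delta St Et It Rt alpha : R) (psi phiinv : R -> R) :
  seir_assumptions beta gamma delta St Et It Rt ->
  is_alpha beta gamma St Et It Rt alpha ->
  St < (gamma / beta) * exp ((beta / gamma) * (alpha - Rt)) ->            (* A5 *)
  is_psi beta gamma delta St Et It Rt alpha psi ->
  is_phiinv (uinf_of beta gamma alpha) (u0_of beta gamma Rt) psi phiinv ->
  let u0 := u0_of beta gamma Rt in
  let EI := fun t => E_fun beta gamma delta St Et Rt psi phiinv t
                     + I_fun beta gamma delta St Et It Rt psi phiinv t in
  let T3 := phi_of u0 psi (gamma / (beta * St * exp ((beta / gamma) * Rt))) in
  0 <= T3 /\
  S_fun beta gamma St Rt phiinv T3 = gamma / beta /\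
  (forall t, 0 <= t -> EI t <= EI T3) /\
  EI T3 = St + Et + It - (gamma / beta) * (1 + ln St - ln (gamma / beta)) /\
  (forall s t, 0 <= s -> s < t -> t < T3 -> EI s < EI t) /\
  (forall s t, T3 < s -> s < t -> EI t < EI s).
Proof.
  intros HA _ HA5 (Hcont & Hleft & Hpos & _) Hinv u0 EI T3.
  pose proof (seir_threshold_lt_St _ _ _ _ _ _ _ HA) as HSt.
  destruct HA as (Hb & Hg & _).
  set (K := St * exp ((beta / gamma) * Rt)) in *. set (c := gamma / beta) in *.
  assert (Hc : 0 < c) by (apply Rdiv_lt_0_compat; assumption).
  assert (HStp : 0 < St) by lra.
  assert (HK : 0 < K) by (apply Rmult_lt_0_compat; [exact HStp | apply exp_pos]).
  assert (HT3def : T3 = phi_of u0 psi (c / K)).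
  { unfold T3, c, K. f_equal. field. pose proof (exp_pos (beta / gamma * Rt)). repeat split; lra. }
  clearbody T3.
  pose proof (seir_maximiser_bounds beta gamma St Rt alpha Hb Hg HSt HA5) as Hmax.
  change (gamma / beta / (St * exp ((beta / gamma) * Rt))) with (c / K) in Hmax.
  fold u0 in Hcont, Hleft, Hpos, Hinv, Hmax. set (uinf := uinf_of beta gamma alpha) in *.
  assert (Huinf : 0 <= uinf) by (left; apply exp_pos).
  assert (HuT3 : phiinv T3 = c / K)
    by (rewrite HT3def; apply (phiinv_phi uinf); auto; lra).
  assert (HEI : forall t, EI t = St + Et + It + Rt + ln_sub_lin K c (phiinv t))
    by (intros t; apply EI_eq_ln_sub_lin).
  assert (HT3 : 0 <= T3) by (rewrite HT3def; apply (phi_nonneg uinf); auto; lra).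
  destruct (ln_sub_lin_comp_unimodal K c T3 phiinv HK Hc HT3 HuT3)
    as (Hle & Hincr & Hdecr).
  - intros t Ht. destruct (Hinv t Ht). lra.
  - exact (phiinv_decreasing uinf u0 psi Huinf Hcont Hleft Hpos phiinv Hinv).
  - split; [exact HT3 |]. split.
    { unfold S_fun. fold K. rewrite HuT3. unfold c. field. lra. }
    split; [| split; [| split]]; intros; rewrite ?HEI.
    + apply Rplus_le_compat_l, Hle; assumption.
    + rewrite HuT3. apply ln_sub_lin_max_value; lra.
    + apply Rplus_lt_compat_l, Hincr; assumption.
    + apply Rplus_lt_compat_l, Hdecr; assumption.
Qed.
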